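(* Let $n$ be a positive integer, $0\le m\le\lfloor n/2\rfloor$ and $0\le k\le m$. Let $T_k$ be the Young tableau of shape $(n-k,k)$ whose first row contains $1,2,\dots,n-k$ and whose second row contains $n-k+1,\dots,n$ (so its columns of length two are $\{i,n-k+i\}$, $1\le i\le k$). Let $R(T_k)\subseteq S_n$ be the subgroup of permutations of $\{1,\dots,n\}$ preserving each row of $T_k$ as a set, and $C(T_k)\subseteq S_n$ the subgroup preserving each column as a set. Let $\Omega=\{n-m+1,\dots,n\}$. For $p\in R(T_k)$ and $q\in C(T_k)$ put $$V=\{\,i \mid i\le k,\ q(i)\ne i\,\},\qquad W=\{\,i\in\Omega \mid p(i)\notin \Omega\cup V\,\}.$$ Then the cardinality of $\Omega\cap (qp)(\Omega)$ equals $m-\#V-\#W$, where $(qp)(\Omega)=q(p(\Omega))$ is the image of the set $\Omega$.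
   Context: $\#X$ denotes the cardinality of a finite set $X$. Permutations act on $\{1,\dots,n\}$ and the product $qp$ means $q\circ p$ (first $p$, then $q$). *)

From mathcomp Require Import all_boot all_order all_algebra all_fingroup.
Set Implicit Arguments. Unset Strict Implicit. Unset Printing Implicit Defensive.

(* Convention: the point i in {1,...,n} is represented by the ordinal
   (i-1 : 'I_n).  So "value v" of an ordinal denotes the integer v+1. *)

Definition row1 (n k : nat) : {set 'I_n} := [set x : 'I_n | x < n - k].
Definition row2 (n k : nat) : {set 'I_n} := [set x : 'I_n | n - k <= x].

Definition colOf (n k : nat) (x : 'I_n) : nat :=
  if n - k <= x then x - (n - k) else x.

Definition colset (n k j : nat) : {set 'I_n} := [set x : 'I_n | colOf k x == j].

Definition RT (n k : nat) : {set {perm 'I_n}} :=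
  [set p : {perm 'I_n} | (p @: row1 n k == row1 n k) && (p @: row2 n k == row2 n k)].

Definition CT (n k : nat) : {set {perm 'I_n}} :=
  [set q : {perm 'I_n} | [forall j : 'I_n, (j < n - k) ==> (q @: colset n k j == colset n k j)]].

Definition Omega (n m : nat) : {set 'I_n} := [set x : 'I_n | n - m <= x].

Definition Vset (n k : nat) (q : {perm 'I_n}) : {set 'I_n} :=
  [set i : 'I_n | (i < k) && (q i != i)].

Definition Wset (n m k : nat) (p q : {perm 'I_n}) : {set 'I_n} :=
  [set i in Omega n m | p i \notin Omega n m :|: Vset k q].

From mathcomp Require Import all_boot all_order all_algebra all_fingroup.
From mathcomp Require Import zify.

(* Let A = p(Omega) and X = Omega :|: V.  Because p preserves the second row of
   T_k and k <= m, A contains that row.  A column permutation q is an involution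
   exchanging i and n-k+i for i in V and fixing the first row beyond column k,
   so X is q-stable and V lies in q(A).  Applying q, A :&: X has the size of
   q(A) :&: X, the disjoint union of Omega :&: q(A) and V; and A :\: X = p(W).
   Counting A = (A :&: X) :|: (A :\: X), which has m elements, gives the formula. *)

Set Implicit Arguments.
Unset Strict Implicit.
Unset Printing Implicit Defensive.

Lemma card_setI_imset_perm_split (T : finType) (p q : {perm T}) (O V : {set T}) :
    q @: (O :|: V) \subset O :|: V -> [disjoint O & V] -> V \subset q @: (p @: O) ->
  #|O :&: q @: (p @: O)| + #|V| + #|[set i in O | p i \notin O :|: V]| = #|O|.
Proof.
set A := p @: O; set X := O :|: V => qXX OV VqA.
have qX : q @: X = X.
  by apply/eqP; rewrite eqEcard qXX card_imset ?leqnn //; exact: perm_inj.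
have cardAX : #|A :&: X| = #|O :&: q @: A| + #|V|.
  rewrite -[LHS](card_imset _ (@perm_inj _ q)) imsetI; last by move=> ? ? _ _; exact: perm_inj.
  rewrite qX setIUr cardsU -setIIr (setIidPr VqA) setIC (disjoint_setI0 OV) setI0.
  by rewrite cards0 subn0 setIC.
have cardW : #|A :\: X| = #|[set i in O | p i \notin X]|.
  rewrite -[RHS](card_imset _ (@perm_inj _ p)); apply: eq_card => x.
  rewrite in_setD; apply/andP/imsetP => [[xNX /imsetP[y yO xE]] | [y]].
    by exists y => //; rewrite inE yO -xE.
  by rewrite inE => /andP[yO yNX] ->; split; last exact: imset_f.
by rewrite -cardAX -cardW cardsID card_imset //; exact: perm_inj.
Qed.

Lemma card_Omega (n m : nat) : m <= n -> #|Omega n m| = m.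
Proof.
move=> le_mn; have shiftP (i : 'I_m) : n - m + i < n by have := ltn_ord i; lia.
have -> : Omega n m = [set Ordinal (shiftP i) | i in 'I_m].
  apply/setP => x; rewrite inE; apply/idP/imsetP => [le_x | [i _ ->]]; last exact: leq_addr.
  have lt_x : x - (n - m) < m by have := ltn_ord x; lia.
  by exists (Ordinal lt_x) => //; apply/val_inj => /=; lia.
by rewrite card_imset ?card_ord // => i j [] /eqP; rewrite eqn_add2l => /eqP /val_inj.
Qed.

Lemma RT_row2_sub (n m k : nat) (p : {perm 'I_n}) :
  p \in RT n k -> k <= m -> row2 n k \subset p @: Omega n m.
Proof.
rewrite inE => /andP[_ /eqP <-] le_km; apply: imsetS.
by apply/subsetP => x; rewrite !inE; lia.
Qed.

Section ColumnGroup.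

Variables (n k : nat) (q : {perm 'I_n}).
Hypotheses (le_kk_n : k + k <= n) (qC : q \in CT n k).

Lemma CT_colOf (x : 'I_n) : colOf k (q x) = colOf k x.
Proof.
have col_lt : colOf k x < n - k by rewrite /colOf; case: ifP; have := ltn_ord x; lia.
pose j := Ordinal (leq_trans col_lt (leq_subr k n)).
move: qC; rewrite inE => /forallP /(_ j) /implyP /(_ col_lt) /eqP col_fixed.
have : q x \in colset n k j by rewrite -col_fixed imset_f // inE.
by rewrite inE => /eqP.
Qed.

Lemma CT_cases (x : 'I_n) :
  q x = x :> nat \/ x < k /\ q x = x + (n - k) :> nat
  \/ n - k <= x /\ q x + (n - k) = x :> nat.
Proof.
have := CT_colOf x; have := ltn_ord x; have := ltn_ord (q x); rewrite /colOf.
by case: ifP => ?; case: ifP => ?; lia.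
Qed.

Lemma CT_involutive : involutive q.
Proof.
move=> x; apply/val_inj => /=.
have fixed_fixed : q (q x) = q x :> nat -> q x = x :> nat by move/val_inj/perm_inj ->.
case: (CT_cases x) => [/val_inj qx | [[]|[]]]; first by rewrite !qx.
all: have := ltn_ord x; case: (CT_cases (q x)) => [|[[]|[]]]; lia.
Qed.

Lemma CT_Vset (x : 'I_n) : x \in Vset k q -> q x = x + (n - k) :> nat.
Proof.
rewrite inE -(inj_eq val_inj) /= => /andP[lt_xk /eqP moved].
by case: (CT_cases x) => [|[[]|[]]]; lia.
Qed.

Lemma Vset_sub_imset_row2 : Vset k q \subset q @: row2 n k.
Proof.
apply/subsetP => x xV; apply/imsetP; exists (q x); last by rewrite CT_involutive.
by rewrite inE (CT_Vset xV) leq_addl.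
Qed.

Lemma CT_stable_Omega_Vset (m : nat) : k <= m -> k + m <= n ->
  q @: (Omega n m :|: Vset k q) \subset Omega n m :|: Vset k q.
Proof.
move=> le_km le_kmn; apply/subsetP => _ /imsetP[x /setUP[xO | xV] ->]; rewrite !inE.
  rewrite CT_involutive -(inj_eq val_inj) /=; move: xO; rewrite inE.
  by have := ltn_ord x; case: (CT_cases x) => [|[[]|[]]]; lia.
by rewrite (CT_Vset xV); lia.
Qed.

End ColumnGroup.

Lemma disjoint_Omega_Vset (n m k : nat) (q : {perm 'I_n}) :
  k + m <= n -> [disjoint Omega n m & Vset k q].
Proof.
move=> le_kmn; rewrite -setI_eq0; apply/eqP/setP => x; rewrite !inE; lia.
Qed.

Theorem lemma2 (n m k : nat) (p q : {perm 'I_n}) :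
  0 < n -> m <= n./2 -> k <= m ->
  p \in RT n k -> q \in CT n k ->
  (#|Omega n m :&: (q @: (p @: Omega n m))|%:Z =
     m%:Z - #|Vset k q|%:Z - #|Wset m k p q|%:Z)%R.
Proof.
move=> _ le_m_half le_km pR qC.
have le_kk_n : k + k <= n by lia.
have le_kmn : k + m <= n by lia.
have VqA : Vset k q \subset q @: (p @: Omega n m).
  exact: subset_trans (Vset_sub_imset_row2 le_kk_n qC) (imsetS _ (RT_row2_sub pR le_km)).
have := card_setI_imset_perm_split (CT_stable_Omega_Vset le_kk_n qC le_km le_kmn)
  (disjoint_Omega_Vset q le_kmn) VqA.
by rewrite card_Omega /Wset; lia.
Qed.
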